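(* Let $T$ be a c.n.u. contraction on $H$. For $\lambda\in\mathbb{C}$ let $W_\lambda=\{(x,\lambda x):x\in H\}\subseteq\mathbb{H}$ and $N_\lambda=W_\lambda\cap A_T^{\perp_s}$. Then for $|\lambda|<1$, $$N_\lambda=\{((I-\lambda T^* )^{-1}f,\ \lambda(I-\lambda T^* )^{-1}f): f\in\mathbb{K}^\perp\},$$ and for $|\lambda|>1$, $$N_\lambda=\{((\lambda-T)^{-1}f,\ \lambda(\lambda-T)^{-1}f): f\in\mathbb{K}_*^\perp\}.$$
   Context: $H$ is an infinite-dimensional separable complex Hilbert space; $T\in\mathbb{B}(H)$ with $\|T\|\le1$ is completely non-unitary (no nonzero invariant subspace on which $T$ is unitary). $\mathbb{K}=\ker(I-T^*T)$, $\mathbb{K}_*=\ker(I-TT^* )$. $\mathbb{H}=H\oplus_\perp H$ with $[(x_1,x_2),(y_1,y_2)]=i(x_1,y_1)_H-i(x_2,y_2)_H$; $S^{\perp_s}=\{a:[a,b]=0\ \forall b\in S\}$; $A_T=\{(x,Tx):x\in\mathbb{K}\}$. *)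

(* Complex Hilbert spaces are set up by hand:
   H is a complete normed module over C := R[i] (R : realType) whose norm
   comes from an inner product ip (linear in the first argument,
   conjugate-linear in the second). *)
From HB Require Import structures.
From mathcomp Require Import all_boot all_order all_algebra.
From mathcomp Require Import all_classical all_reals all_analysis.
From mathcomp Require Import complex.
Set Implicit Arguments. Unset Strict Implicit. Unset Printing Implicit Defensive.
Import Order.TTheory GRing.Theory Num.Theory.
Import numFieldNormedType.Exports.
Local Open Scope classical_set_scope.
Local Open Scope ring_scope.

Section Hilbert.
Variable R : realType.
Local Notation C := (R[i]).
Variable H : completeNormedModType C.

Definition is_inner_product (ip : H -> H -> C) : Prop :=
  [/\ forall (a : C) (x y z : H), ip (a *: x + y) z = a * ip x z + ip y z,
      forall x y : H, ip y x = (ip x y)^* &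
      forall x : H, ip x x = `|x| ^+ 2].

Definition separable : Prop :=
  exists D : set H, countable D /\ closure D = setT.

Definition infinite_dimensional : Prop :=
  forall s : seq H, exists x : H,
    forall c : seq C, x <> \sum_(j < size s) c`_j *: s`_j.

Definition is_adjoint (ip : H -> H -> C) (T Ts : H -> H) : Prop :=
  forall x y : H, ip (T x) y = ip x (Ts y).

Definition closed_subspace (M : set H) : Prop :=
  [/\ M 0, (forall x y, M x -> M y -> M (x + y)),
      (forall (a : C) x, M x -> M (a *: x)) & closed M].

Definition completely_non_unitary (T : H -> H) : Prop :=
  forall M : set H, closed_subspace M ->
    T @` M `<=` M -> M `<=` T @` M ->
    (forall x, M x -> `|T x| = `|x|) ->
    M `<=` [set 0].

Definition orth (ip : H -> H -> C) (S : set H) : set H :=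
  [set f | forall k, S k -> ip f k = 0].

(* K = ker (I - T* T), K_* = ker (I - T T* ) *)
Definition defect_ker (T Ts : H -> H) : set H := [set x | x - Ts (T x) = 0].
Definition defect_ker_star (T Ts : H -> H) : set H := [set x | x - T (Ts x) = 0].

Definition sform (ip : H -> H -> C) (a b : H * H) : C :=
  'i * ip a.1 b.1 - 'i * ip a.2 b.2.

Definition sorth (ip : H -> H -> C) (S : set (H * H)) : set (H * H) :=
  [set a | forall b, S b -> sform ip a b = 0].

Definition A_T (T Ts : H -> H) : set (H * H) :=
  [set (x, T x) | x in defect_ker T Ts].

Definition W_ (l : C) : set (H * H) := [set (x, l *: x) | x in [set: H]].

Definition N_ (ip : H -> H -> C) (T Ts : H -> H) (l : C) : set (H * H) :=
  W_ l `&` sorth ip (A_T T Ts).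

End Hilbert.

(* For |l| < 1 the operator I - l T^* is invertible by the Neumann series,
   because |T^*| <= |T| <= 1; for |l| > 1 so is l - T = l (I - l^-1 T).
   A point (x, l x) of W_l is [.,.]-orthogonal to (k, T k) iff
   i <x - l T^* x, k> = 0, so N_l is the preimage of K^perp under I - l T^*.
   For |l| > 1 one uses instead that T maps K onto K_* with inverse T^*,
   which turns the same condition into <l x - T x, T k> = 0. *)

From HB Require Import structures.
From mathcomp Require Import all_boot all_order all_algebra.
From mathcomp Require Import all_classical all_reals all_analysis.
From mathcomp Require Import complex.
From mathcomp Require Import ring.
Import Order.TTheory GRing.Theory Num.Theory.
Import numFieldNormedType.Exports.
Local Open Scope classical_set_scope.
Local Open Scope ring_scope.

Lemma exists_expr_lt (R : realType) (q e : R[i]) :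
  0 <= q -> q < 1 -> 0 < e -> exists N : nat, q ^+ N < e.
Proof.
case: q => a b; case: e => c d.
rewrite !lecE !ltcE /= => /andP[/eqP-> a_ge0] /andP[_ a_lt1] /andP[/eqP-> c_gt0].
have /cvg_expr/cvgrPdist_lt/(_ c c_gt0)[N _ aN] : `|a| < 1 by rewrite ger0_norm.
exists N; rewrite -[Complex a 0]/(real_complex R a) -[Complex c 0]/(real_complex R c).
rewrite -rmorphXn ltcR.
by apply: le_lt_trans (aN N (leqnn N)); rewrite sub0r normrN ler_norm.
Qed.

Section GeometricCauchy.
Context {R : realType} {V : completeNormedModType R[i]} {q : R[i]}.
Context {u : V ^nat} {c : R[i]}.
Hypotheses (q_ge0 : 0 <= q) (q_lt1 : q < 1).
Hypothesis du : forall n, `|u n.+1 - u n| <= q ^+ n * c.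

Let c_ge0 : 0 <= c.
Proof. by rewrite -[c]mul1r -(expr0 q) (le_trans _ (du 0%N)). Qed.

Lemma geometric_increments_dist n m :
  (1 - q) * `|u (n + m)%N - u n| <= q ^+ n * c.
Proof.
have q1_ge0 : 0 <= 1 - q by rewrite subr_ge0 ltW.
suff : (1 - q) * `|u (n + m)%N - u n| <= q ^+ n * (1 - q ^+ m) * c.
  move/le_trans; apply; rewrite -mulrA ler_wpM2l ?exprn_ge0 // mulrBl mul1r gerBl.
  by rewrite mulr_ge0 ?exprn_ge0.
elim: m => [|m IHm]; first by rewrite addn0 subrr normr0 !mulr0 expr0 subrr mulr0 mul0r.
rewrite addnS (le_trans (ler_wpM2l q1_ge0 (ler_distD (u (n + m)%N) _ _))) //.
rewrite mulrDr (le_trans (lerD (ler_wpM2l q1_ge0 (du _)) IHm)) //.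
by rewrite exprS exprD le_eqVlt; apply/orP; left; apply/eqP; ring.
Qed.

Lemma geometric_increments_cvgn : cvgn u.
Proof.
have q1_gt0 : 0 < 1 - q by rewrite subr_gt0.
apply/cauchy_cvgP/cauchy_ballP => e e_gt0; near_simpl.
have [N qN] : exists N : nat, q ^+ N < e * (1 - q) / (c + 1).
  by apply: exists_expr_lt; rewrite // divr_gt0 ?mulr_gt0 // ltr_wpDl.
have close a b : (N <= a)%N -> (a <= b)%N -> `|u a - u b| < e.
  move=> Na ab; rewrite distrC -(subnKC ab) -(ltr_pM2l q1_gt0) [ltRHS]mulrC.
  apply: le_lt_trans (geometric_increments_dist _ _) _.
  apply: (@le_lt_trans _ _ (q ^+ N * (c + 1))).
    by apply: ler_pM; rewrite ?exprn_ge0 ?lerDl ?(ler_wiXn2l q_ge0 (ltW q_lt1)).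
  by rewrite -ltr_pdivlMr ?ltr_wpDl.
exists ([set n | (N <= n)%N], [set n | (N <= n)%N]); first by split; exists N.
move=> [n m] [/= Nn Nm]; rewrite -ball_normE /=.
have [nm|mn] := leqP n m; first exact: close.
by rewrite distrC close // ltnW.
Qed.

End GeometricCauchy.

Section Neumann.
Context {R : realType} {V : completeNormedModType R[i]}.
Variables (S : {linear V -> V}) (q : R[i]).
Hypotheses (q_ge0 : 0 <= q) (q_lt1 : q < 1).
Hypothesis S_le : forall x, `|S x| <= q * `|x|.

Lemma contraction_continuous : continuous S.
Proof.
apply/bounded_linear_continuous/linear_boundedP; near=> r => x.
apply: le_trans (S_le x) _; rewrite ler_wpM2r //; near: r.
exact/nbhs_pinfty_ge/ger0_real.
Unshelve. all: end_near.
Qed.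

Lemma sub_contraction_surjective f : exists x, x - S x = f.
Proof.
pose y n := iter n (fun x => f + S x) 0.
have yS n : y n.+1 = f + S (y n) by [].
have dy n : `|y n.+1 - y n| <= q ^+ n * `|f|.
  elim: n => [|n IHn]; first by rewrite /= linear0 addr0 subr0 expr0 mul1r.
  have -> : y n.+2 - y n.+1 = S (y n.+1 - y n).
    by rewrite linearB !yS opprD addrACA subrr add0r.
  by rewrite exprS -mulrA (le_trans (S_le _)) // ler_wpM2l.
have /cvg_ex[x yx] := geometric_increments_cvgn q_ge0 q_lt1 dy.
have yx_fix : [sequence y n.+1]_n @ \oo --> f + S x.
  apply: cvgD; first exact: cvg_cst.
  exact: continuous_cvg (contraction_continuous x) yx.
exists x; suff {1}-> : x = f + S x by rewrite addrK.
have yx_shift : [sequence y n.+1]_n @ \oo --> x by rewrite cvg_shiftS.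
exact: cvg_unique yx_shift yx_fix.
Qed.

Lemma sub_contraction_bij : bijective (fun x => x - S x).
Proof.
have [g gK] := choice sub_contraction_surjective.
apply: Bijective (inj_can_sym gK _) gK => x y /eqP; rewrite -subr_eq0.
have -> : x - S x - (y - S y) = x - y - S (x - y).
  by rewrite [S (x - y)]linearB !opprB addrACA [RHS]addrACA [- S x - y]addrC.
rewrite subr_eq0 => /eqP xy_fix.
apply/eqP; rewrite -subr_eq0 -normr_le0.
have : (1 - q) * `|x - y| <= 0 by rewrite mulrBl mul1r subr_le0 {1}xy_fix S_le.
by rewrite pmulr_rle0 // subr_gt0.
Qed.

End Neumann.

Section Resolvent.
Context {R : realType} {V : completeNormedModType R[i]} {S : {linear V -> V}}.
Hypothesis S_le : forall x, `|S x| <= `|x|.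

Lemma sub_scale_bij l : `|l| < 1 -> bijective (fun x => x - l *: S x).
Proof.
move=> l_lt1; apply: (sub_contraction_bij (l \*: S) `|l|) => // x.
by rewrite /= normrZ ler_wpM2l.
Qed.

Lemma scale_sub_bij l : 1 < `|l| -> bijective (fun x => l *: x - S x).
Proof.
move=> l_gt1; have l_neq0 : l != 0 by rewrite -normr_gt0 (lt_trans ltr01).
have -> : (fun x => l *: x - S x) = *:%R l \o (fun x => x - l^-1 *: S x).
  by apply/funext => x /=; rewrite scalerBr scalerA mulfV // scale1r.
apply: bij_comp; first exact: Bijective (scalerK l_neq0) (scalerKV l_neq0).
apply: (sub_contraction_bij (l^-1 \*: S) `|l^-1|).
- exact: normr_ge0.
- by rewrite normfV invf_lt1 // (lt_trans ltr01).
- by move=> x; rewrite /= normrZ ler_wpM2l.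
Qed.

End Resolvent.

Section InnerProduct.
Context {R : realType} {H : completeNormedModType R[i]} {ip : H -> H -> R[i]}.
Hypothesis ip_inner : is_inner_product ip.

Lemma ipDl x y z : ip (x + y) z = ip x z + ip y z.
Proof. by case: ip_inner => lin _ _; have := lin 1 x y z; rewrite scale1r mul1r. Qed.

Lemma ip0l z : ip 0 z = 0.
Proof. by apply: (addrI (ip 0 z)); rewrite -ipDl !addr0. Qed.

Lemma ipZl a x z : ip (a *: x) z = a * ip x z.
Proof. by case: ip_inner => lin _ _; have := lin a x 0 z; rewrite !addr0 ip0l addr0. Qed.

Lemma ipBl x y z : ip (x - y) z = ip x z - ip y z.
Proof. by rewrite ipDl -scaleN1r ipZl mulN1r. Qed.

Lemma ipBr x y z : ip z (x - y) = ip z x - ip z y.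
Proof. by case: ip_inner => _ sym _; rewrite sym ipBl rmorphB /= -!sym. Qed.

Lemma ip_normE x : ip x x = `|x| ^+ 2.
Proof. by case: ip_inner. Qed.

End InnerProduct.

Lemma N_image (R : realType) (H : completeNormedModType R[i])
    (ip : H -> H -> R[i]) (T Ts : H -> H) (l : R[i]) (A Rl : H -> H) (P : set H) :
    cancel A Rl -> cancel Rl A ->
    (forall x, sorth ip (A_T T Ts) (x, l *: x) <-> P (A x)) ->
  N_ ip T Ts l = [set (Rl f, l *: Rl f) | f in P].
Proof.
move=> AK RlK sorthP; apply/seteqP; split=> p.
- by move=> [[x _ <-] /sorthP PAx]; exists (A x); rewrite ?AK.
- by move=> [f Pf <-]; split; [exists (Rl f) | apply/sorthP; rewrite RlK].
Qed.

Section Adjoint.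
Context {R : realType} {H : completeNormedModType R[i]} {ip : H -> H -> R[i]}.
Context {T Ts : {linear H -> H}}.
Hypotheses (ip_inner : is_inner_product ip) (adjT : is_adjoint ip T Ts).

Lemma ip_adjr x k : ip x (T k) = ip (Ts x) k.
Proof. by case: ip_inner => _ sym _; rewrite sym adjT -sym. Qed.

Lemma defect_ker_star_T k : defect_ker T Ts k -> defect_ker_star T Ts (T k).
Proof. by rewrite /defect_ker /defect_ker_star /= => kK; rewrite -linearB kK linear0. Qed.

Lemma defect_ker_Ts m : defect_ker_star T Ts m -> defect_ker T Ts (Ts m).
Proof. by rewrite /defect_ker /defect_ker_star /= => mK; rewrite -linearB mK linear0. Qed.

Lemma sform_graph x l k :
  sform ip (x, l *: x) (k, T k) = 'i * ip (x - l *: Ts x) k.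
Proof. by rewrite /sform /= ipZl // ip_adjr -mulrBr ipBl // ipZl. Qed.

Lemma sform_graph_defect x l k : defect_ker T Ts k ->
  sform ip (x, l *: x) (k, T k) = - 'i * ip (l *: x - T x) (T k).
Proof.
move=> /subr0_eq kK; rewrite /sform /= {1}kK -adjT !ipZl // ipBl // ipZl //.
by ring.
Qed.

Lemma sorth_A_T_graph l x :
  sorth ip (A_T T Ts) (x, l *: x) <-> orth ip (defect_ker T Ts) (x - l *: Ts x).
Proof.
split=> [xl_orth k kK | x_orth _ [k kK <-]].
- have /eqP : sform ip (x, l *: x) (k, T k) = 0 by apply: xl_orth; exists k.
  by rewrite sform_graph mulf_eq0 (negbTE (@neq0Ci _)) => /eqP.
- by rewrite sform_graph x_orth ?mulr0.
Qed.

Lemma sorth_A_T_graph_star l x :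
  sorth ip (A_T T Ts) (x, l *: x) <-> orth ip (defect_ker_star T Ts) (l *: x - T x).
Proof.
split=> [xl_orth m mK | x_orth _ [k kK <-]].
- have TTs_m : T (Ts m) = m by apply/esym/subr0_eq.
  have /eqP : sform ip (x, l *: x) (Ts m, T (Ts m)) = 0.
    by apply: xl_orth; exists (Ts m) => //; apply: defect_ker_Ts.
  rewrite sform_graph_defect; last exact: defect_ker_Ts.
  by rewrite TTs_m mulf_eq0 oppr_eq0 (negbTE (@neq0Ci _)) => /eqP.
- rewrite sform_graph_defect // x_orth ?mulr0 //.
  exact: defect_ker_star_T.
Qed.

Hypothesis T_le : forall x, `|T x| <= `|x|.

(* Expanding [|T u - y|^2 >= 0] with [u = Ts y], where [<T u, y> = |u|^2],
   avoids Cauchy-Schwarz. *)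
Lemma adjoint_norm_le y : `|Ts y| <= `|y|.
Proof.
set u := Ts y.
have Tu_y : ip (T u) y = `|u| ^+ 2 by rewrite adjT ip_normE.
have y_Tu : ip y (T u) = `|u| ^+ 2.
  by case: ip_inner => _ sym _; rewrite sym Tu_y conj_Creal // rpredX ?normr_real.
have expand : `|T u - y| ^+ 2 = (`|y| ^+ 2 - `|u| ^+ 2) - (`|u| ^+ 2 - `|T u| ^+ 2).
  by rewrite -(ip_normE ip_inner) !(ipBl, ipBr) // Tu_y y_Tu !ip_normE //; ring.
have Tu_le : `|T u| ^+ 2 <= `|u| ^+ 2 by rewrite ler_pXn2r ?nnegrE ?normr_ge0.
have : `|u| ^+ 2 <= `|y| ^+ 2.
  rewrite -subr_ge0 (le_trans (exprn_ge0 2 (normr_ge0 (T u - y)))) // expand.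
  by rewrite gerBl subr_ge0.
by rewrite ler_pXn2r ?nnegrE ?normr_ge0.
Qed.

End Adjoint.

Theorem proposition4p4 (R : realType) (H : completeNormedModType R[i])
  (ip : H -> H -> R[i]) (T Ts : {linear H -> H}) :
  is_inner_product ip ->
  separable H -> infinite_dimensional H ->
  continuous T ->
  (forall x : H, `|T x| <= `|x|) ->
  is_adjoint ip T Ts ->
  completely_non_unitary T ->
  (forall l : R[i], `|l| < 1 ->
     exists Rl : H -> H,
       (forall x, Rl (x - l *: Ts x) = x) /\ (forall f, Rl f - l *: Ts (Rl f) = f) /\
       N_ ip T Ts l = [set (Rl f, l *: Rl f) | f in orth ip (defect_ker T Ts)]) /\
  (forall l : R[i], 1 < `|l| ->
     exists Rl : H -> H,
       (forall x, Rl (l *: x - T x) = x) /\ (forall f, l *: Rl f - T (Rl f) = f) /\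
       N_ ip T Ts l = [set (Rl f, l *: Rl f) | f in orth ip (defect_ker_star T Ts)]).
Proof.
move=> ip_inner _ _ _ T_le adjT _; split=> l l_bound.
- have [Rl AK RlK] := sub_scale_bij (adjoint_norm_le ip_inner adjT T_le) l l_bound.
  exists Rl; do !split => //.
  exact: N_image AK RlK (sorth_A_T_graph ip_inner adjT l).
- have [Rl AK RlK] := scale_sub_bij T_le l l_bound.
  exists Rl; do !split => //.
  exact: N_image AK RlK (sorth_A_T_graph_star ip_inner adjT l).
Qed.
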